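(* Let $(\mathcal{F}_\alpha)_{\alpha<\omega_1}$ and $(\mathcal{G}_\alpha)_{\alpha<\omega_1}$ be transfinite families defined by two (possibly different) approximating families. Then for every $\alpha<\omega_1$ and every infinite $N\subset\mathbb{N}$ there is an infinite $M\subset N$ such that $\mathcal{G}_\alpha^M\subset\mathcal{F}_\alpha$.
   Context: An approximating family assigns to each countable limit ordinal $\alpha$ finite sets $A_n(\alpha)\subset[0,\alpha)$, $n\in\mathbb{N}$, with $A_n(\alpha)\subset A_{n+1}(\alpha)$ and $\lim_n\max A_n(\alpha)=\alpha$. The associated transfinite family $(\mathcal{F}_\alpha)$ of sets of finite subsets of $\mathbb{N}$: $\mathcal{F}_0=\{\emptyset\}$; $\mathcal{F}_{\beta+1}=\{\{n\}\cup E:n\in\mathbb{N},E\in\mathcal{F}_\beta\}\cup\{\emptyset\}$; for limit $\alpha$, $\mathcal{F}_\alpha=\{\emptyset\}\cup\{E\ne\emptyset:E\in\bigcup_{\beta\in A_{\min E}(\alpha)}\mathcal{F}_\beta\}$. For $M=\{m_1<m_2<\dots\}$ and a set $\mathcal{A}$ of finite subsets of $\mathbb{N}$, $\mathcal{A}^M=\{\{m_i:i\in E\}:E\in\mathcal{A}\}$. *)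

From Stdlib Require List.
From mathcomp Require Import all_boot.
From mathcomp Require Import finmap.
Set Implicit Arguments. Unset Strict Implicit. Unset Printing Implicit Defensive.
Local Open Scope fset_scope.

(* Countable ordinals are modelled by an arbitrary well-ordered type (O, lt)
   in which every element has countably many predecessors; (omega_1, <) is
   such a structure and every such structure is (isomorphic to) an initial
   segment of omega_1. *)
Definition ord_le (O : Type) (lt : O -> O -> Prop) (x y : O) : Prop :=
  lt x y \/ x = y.

Definition countable_ordinal_order (O : Type) (lt : O -> O -> Prop) : Prop :=
  [/\ well_founded lt,
      (forall x y z, lt x y -> lt y z -> lt x z),
      (forall x y, [\/ lt x y, x = y | lt y x]) &
      (forall a : O, exists f : O -> nat,
          forall x y, lt x a -> lt y a -> f x = f y -> x = y)].

Definition is_zero (O : Type) (lt : O -> O -> Prop) (a : O) : Prop :=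
  forall b, ~ lt b a.

Definition is_succ_of (O : Type) (lt : O -> O -> Prop) (a b : O) : Prop :=
  lt b a /\ forall c, lt b c -> ord_le lt a c.

Definition is_limit (O : Type) (lt : O -> O -> Prop) (a : O) : Prop :=
  ~ is_zero lt a /\ forall b, ~ is_succ_of lt a b.

(* Approximating family: to each limit a, finite sets A n a (as lists)
   contained in [0,a), increasing in n, with lim_n max (A n a) = a. *)
Definition approximating_family (O : Type) (lt : O -> O -> Prop)
    (A : nat -> O -> seq O) : Prop :=
  forall a, is_limit lt a ->
    [/\ (forall n b, List.In b (A n a) -> lt b a),
        (forall n b, List.In b (A n a) -> List.In b (A n.+1 a)) &
        (forall b, lt b a -> exists n c, List.In c (A n a) /\ ord_le lt b c)].

(* F is the transfinite family associated with A (these recursion equations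
   determine F uniquely by well-founded recursion). *)
Definition transfinite_family (O : Type) (lt : O -> O -> Prop)
    (A : nat -> O -> seq O) (F : O -> {fset nat} -> Prop) : Prop :=
  [/\ (forall a, is_zero lt a -> forall E, F a E <-> E = fset0),
      (forall a b, is_succ_of lt a b -> forall E,
          F a E <-> (E = fset0 \/ exists n E', F b E' /\ E = n |` E')) &
      (forall a, is_limit lt a -> forall E,
          F a E <-> (E = fset0 \/
             exists n, [/\ n \in E, (forall k, k \in E -> n <= k) &
                          exists b, List.In b (A n a) /\ F b E]))].

(* A^M for M = {m 0 < m 1 < ...} : the image of E under m *)
Definition fimage (m : nat -> nat) (E : {fset nat}) : {fset nat} :=
  [fset m i | i in E].

From mathcomp Require Import all_boot.
From mathcomp Require Import finmap.
From Stdlib Require Import Classical IndefiniteDescription.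
Set Implicit Arguments. Unset Strict Implicit. Unset Printing Implicit Defensive.
Local Open Scope fset_scope.

(* Say that G_b embeds into F_g if some increasing m maps every E in G_b to
   m(E) in F_g.  The families are spreading: if s is increasing on E with
   s >= id, then E in F_g gives s(E) in F_g; so an embedding stays one when m
   is replaced by any pointwise larger increasing map.  By induction on g,
   G_b embeds into F_g for every b <= g.  At a limit g, a set of F_c with c in
   A_k(g) lies in F_g as soon as its minimum is >= k, so at stage i it
   suffices to dominate the embeddings and the indices k chosen for the
   finitely many b in B_i(g).  Finally, the embedding is dominated by an
   increasing sequence inside N. *)

Definition increasing (u : nat -> nat) := forall i, u i < u i.+1.

Definition embeds (P Q : {fset nat} -> Prop) :=
  exists2 m, increasing m & forall E, P E -> Q (fimage m E).

Section Increasing.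
Variable u : nat -> nat.
Hypothesis u_incr : increasing u.

Lemma increasing_lt : {homo u : i j / i < j}.
Proof. exact: homo_ltn ltn_trans u_incr. Qed.

Lemma increasing_leq : {mono u : i j / i <= j}.
Proof. exact: leq_mono increasing_lt. Qed.

Lemma increasing_ltn : {mono u : i j / i < j}.
Proof. exact: leqW_mono increasing_leq. Qed.

Lemma increasing_ge_id i : i <= u i.
Proof. by elim: i => // i IH; apply: leq_ltn_trans IH (u_incr i). Qed.

Definition increasing_inv (x : nat) := find (fun i => u i == x) (iota 0 x.+1).

Lemma increasing_invK i : increasing_inv (u i) = i.
Proof.
have has_i : has (fun j => u j == u i) (iota 0 (u i).+1).
  by apply/hasP; exists i; rewrite ?mem_iota ?ltnS ?increasing_ge_id.
have := nth_find 0 has_i; move: has_i; rewrite has_find size_iota => lt_find.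
by rewrite nth_iota // add0n => /eqP /(incn_inj increasing_leq).
Qed.

End Increasing.

Fixpoint climb (p b : nat -> nat) (i : nat) : nat :=
  p (if i is j.+1 then maxn (climb p b j).+1 (b i) else b 0).

Lemma exists_increasing_above (b : nat -> nat) (N : nat -> Prop) :
  (forall k, exists n, k <= n /\ N n) ->
  exists m, [/\ increasing m, forall i, b i <= m i & forall i, N (m i)].
Proof.
move=> /functional_choice [p p_spec]; exists (climb p b); split.
- by move=> i; apply: leq_trans (leq_maxl _ _) (p_spec _).1.
- by case=> [|i]; [apply: (p_spec _).1 | apply: leq_trans (leq_maxr _ _) (p_spec _).1].
- by case=> [|i]; apply: (p_spec _).2.
Qed.

Lemma leq_foldr_maxn (T : Type) (f : T -> nat) (s : seq T) x :
  List.In x s -> f x <= foldr maxn 0 (map f s).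
Proof.
elim: s => //= y s IH [->|/IH fx_le]; first exact: leq_maxl.
exact: leq_trans fx_le (leq_maxr _ _).
Qed.

Lemma fimage0 m : fimage m fset0 = fset0.
Proof. exact: imfset0. Qed.

Lemma fimageU1 m n E : fimage m (n |` E) = m n |` fimage m E.
Proof. exact: imfsetU1. Qed.

Lemma in_fimage m E k : reflect (exists2 i, i \in E & k = m i) (k \in fimage m E).
Proof. exact: (iffP (imfsetP _ _ _ _)). Qed.

Lemma fimage_comp m s E : fimage s (fimage m E) = fimage (s \o m) E.
Proof.
apply/fsetP=> k.
apply/in_fimage/in_fimage=> [[_ /in_fimage [i iE ->] ->]|[i iE ->]].
  by exists i.
by exists (m i) => //; apply/in_fimage; exists i.
Qed.

Lemma eq_in_fimage m s E : {in E, m =1 s} -> fimage m E = fimage s E.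
Proof.
by move=> ms; apply/fsetP=> k; apply/in_fimage/in_fimage=> [][i iE ->]; exists i;
  rewrite ?ms.
Qed.

Section TransfiniteFamilies.
Variables (O : Type) (lt : O -> O -> Prop).
Hypothesis ord : countable_ordinal_order lt.

Lemma lt_irrefl x : ~ lt x x.
Proof. have [wf _ _ _] := ord; elim: (wf x) => y _ IH lt_yy; exact: (IH y lt_yy lt_yy). Qed.

Lemma le_of_lt_succ a b c : is_succ_of lt a b -> lt c a -> ord_le lt c b.
Proof.
have [_ tr tot _] := ord; move=> [ba b_min] ca.
case: (tot c b) => [cb|->|bc]; [by left | by right |].
case: (b_min _ bc) => [ac|a_c]; first by case: (lt_irrefl (tr _ _ _ ac ca)).
by rewrite a_c in ca; case: (lt_irrefl ca).
Qed.

Lemma zero_succ_or_limit a :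
  [\/ is_zero lt a, exists b, is_succ_of lt a b | is_limit lt a].
Proof.
case: (classic (is_zero lt a)) => [|nz]; first by constructor 1.
case: (classic (exists b, is_succ_of lt a b)) => [|ns]; first by constructor 2.
by constructor 3; split=> // b sb; apply: ns; exists b.
Qed.

Lemma approx_mono A a n k c : approximating_family lt A -> is_limit lt a ->
  n <= k -> List.In c (A n a) -> List.In c (A k a).
Proof.
move=> hA la; have [_ A_incr _] := hA a la.
elim: k => [|k IH]; first by rewrite leqn0 => /eqP ->.
by rewrite leq_eqVlt => /orP [/eqP -> //|/IH cAk /cAk /A_incr].
Qed.

Section Spreading.
Variables (A : nat -> O -> seq O) (F : O -> {fset nat} -> Prop).
Hypotheses (hA : approximating_family lt A) (hF : transfinite_family lt A F).

Lemma F_fset0 g : F g fset0.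
Proof.
have [Fz Fs Fl] := hF; case: (zero_succ_or_limit g) => [z|[b sb]|l].
- exact/(Fz _ z).
- by apply/(Fs _ _ sb); left.
- by apply/(Fl _ l); left.
Qed.

Lemma F_spread g E s : F g E ->
  {in E &, {homo s : x y / x < y}} -> {in E, forall x, x <= s x} ->
  F g (fimage s E).
Proof.
have [wf _ _ _] := ord; have [Fz Fs Fl] := hF.
elim: (wf g) E => {}g _ IH E FE s_incr s_ge.
case: (zero_succ_or_limit g) => [z|[b sb]|l].
- by move/(Fz _ z): FE => ->; rewrite fimage0; apply: F_fset0.
- move/(Fs _ _ sb): FE s_incr s_ge => [->|[n [E' [FE' ->]]]] s_incr s_ge.
    by rewrite fimage0; apply: F_fset0.
  apply/(Fs _ _ sb); right; exists (s n), (fimage s E'); rewrite fimageU1.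
  split=> //; apply: IH FE' _ _; first by case: sb.
    by move=> x y xE yE; apply: s_incr (fset1Ur _ xE) (fset1Ur _ yE).
  by move=> x xE; apply: s_ge (fset1Ur _ xE).
- move/(Fl _ l): FE => [->|[n [nE n_min [b [bA FbE]]]]].
    by rewrite fimage0; apply: F_fset0.
  have [A_lt _ _] := hA l.
  apply/(Fl _ l); right; exists (s n); split.
  + by apply/in_fimage; exists n.
  + move=> _ /in_fimage [x xE ->]; move: (n_min _ xE); rewrite leq_eqVlt.
    by case/orP=> [/eqP -> // | /(s_incr _ _ nE xE) /ltnW].
  + exists b; split; first exact: approx_mono hA l (s_ge _ nE) bA.
    exact: IH (A_lt _ _ bA) _ FbE s_incr s_ge.
Qed.

Lemma F_dominate g (E : {fset nat}) u v : increasing u -> increasing v ->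
  {in E, forall i, u i <= v i} -> F g (fimage u E) -> F g (fimage v E).
Proof.
move=> u_incr v_incr uv FuE.
have -> : fimage v E = fimage (v \o increasing_inv u) (fimage u E).
  by rewrite fimage_comp; apply: eq_in_fimage => i _ /=; rewrite increasing_invK.
apply: F_spread FuE _ _.
  move=> _ _ /in_fimage [i _ ->] /in_fimage [j _ ->] /=.
  by rewrite !increasing_invK // increasing_ltn //; apply: increasing_lt.
by move=> _ /in_fimage [i iE ->] /=; rewrite increasing_invK // uv.
Qed.

Lemma F_succ_of a b X : is_succ_of lt a b -> F b X -> F a X.
Proof.
have [_ Fs _] := hF; move=> sb FbX; apply/(Fs _ _ sb).
have [->|[x xX]] := fset_0Vmem X; [by left | right].
by exists x, X; split=> //; apply/fsetP=> k; rewrite in_fset1U; case: eqP => // ->.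
Qed.

Lemma F_limit g k c X : is_limit lt g -> List.In c (A k g) -> F c X ->
  {in X, forall x, k <= x} -> F g X.
Proof.
have [_ _ Fl] := hF; move=> l cA FcX k_le; apply/(Fl _ l).
have [->|[x xX]] := fset_0Vmem X; [by left | right].
have [n nX n_min] := ex_minnP (ex_intro (fun n => n \in X) x xX).
exists n; split=> //; exists c; split=> //; exact: approx_mono hA l (k_le _ nX) cA.
Qed.

End Spreading.

Section Embedding.
Variables (A B : nat -> O -> seq O) (F G : O -> {fset nat} -> Prop).
Hypotheses (hA : approximating_family lt A) (hB : approximating_family lt B).
Hypotheses (hF : transfinite_family lt A F) (hG : transfinite_family lt B G).

Lemma embeds_zero a : is_zero lt a -> embeds (G a) (F a).
Proof.
have [Gz _ _] := hG; move=> z.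
by exists id => // E /(Gz _ z) ->; rewrite fimage0; exact: (F_fset0 hF).
Qed.

Lemma embeds_succ a b : is_succ_of lt a b -> embeds (G b) (F b) -> embeds (G a) (F a).
Proof.
have [_ Fs _] := hF; have [_ Gs _] := hG; move=> sb [m m_incr Gb_F].
exists m => // E /(Gs _ _ sb) [->|[n [E' [GE' ->]]]].
  by rewrite fimage0; exact: (F_fset0 hF).
apply/(Fs _ _ sb); right; exists (m n), (fimage m E').
by rewrite fimageU1; split=> //; apply: Gb_F.
Qed.

Lemma embeds_limit_lt g b k c : is_limit lt g -> List.In c (A k g) ->
  embeds (G b) (F c) -> embeds (G b) (F g).
Proof.
move=> l cA [m m_incr Gb_Fc].
have mk_incr : increasing (fun i => (m i + k)%N) by move=> i; rewrite ltn_add2r.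
exists (fun i => (m i + k)%N) => // E GbE.
apply: (F_limit hA hF l cA) => [|_ /in_fimage [i _ ->]]; last exact: leq_addl.
by apply: (F_dominate hA hF m_incr mk_incr _ (Gb_Fc _ GbE)) => i _; apply: leq_addr.
Qed.

Lemma embeds_limit g : is_limit lt g ->
  (forall b, lt b g -> exists k c, List.In c (A k g) /\ embeds (G b) (F c)) ->
  embeds (G g) (F g).
Proof.
have [_ _ Gl] := hG; move=> l approx.
have [B_lt _ _] := hB l.
pose spec b (t : nat * (nat -> nat)) := exists c,
  [/\ List.In c (A t.1 g), increasing t.2 & forall E, G b E -> F c (fimage t.2 E)].
have [f f_spec] : exists f, forall b, lt b g -> spec b (f b).
  apply: (functional_choice (fun b t => lt b g -> spec b t)) => b.
  case: (classic (lt b g)) => [/approx [k [c [cA [m m_incr Gb_Fc]]]]|nbg].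
    by exists (k, m) => _; exists c.
  by exists (0, id) => /nbg.
pose bound i := foldr maxn 0 (map (fun b => maxn ((f b).2 i) (f b).1) (B i g)).
have [m [m_incr bound_m _]] :=
  exists_increasing_above bound (fun k => ex_intro _ k (conj (leqnn k) I)).
exists m => // E /(Gl _ l) [->|[n [nE n_min [b [bB GbE]]]]].
  by rewrite fimage0; exact: (F_fset0 hF).
have [c [cA fb_incr Gb_Fc]] := f_spec b (B_lt _ _ bB).
have fb_m i : n <= i -> (f b).2 i <= m i /\ (f b).1 <= m i.
  move=> ni; have bBi := approx_mono hB l ni bB.
  have := leq_foldr_maxn (fun b => maxn ((f b).2 i) (f b).1) bBi.
  by rewrite geq_max => /andP [le1 le2]; split; apply: leq_trans (bound_m i).
apply: (F_limit hA hF l cA) => [|_ /in_fimage [i iE ->]].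
  apply: (F_dominate hA hF fb_incr m_incr _ (Gb_Fc _ GbE)) => i iE.
  exact: (fb_m i (n_min _ iE)).1.
exact: (fb_m i (n_min _ iE)).2.
Qed.

Lemma embeds_le g b : ord_le lt b g -> embeds (G b) (F g).
Proof.
have [wf _ _ _] := ord.
elim: (wf g) b => {}g _ IH b bg.
case: (zero_succ_or_limit g) => [z|[d sd]|l].
- by case: bg => [/z []|->]; apply: embeds_zero.
- have dg : lt d g by case: sd.
  case: bg => [/(le_of_lt_succ sd) bd|->].
    have [m m_incr Gb_Fd] := IH d dg b bd.
    by exists m => // E /Gb_Fd /(F_succ_of hF sd).
  exact: embeds_succ sd (IH d dg d (or_intror erefl)).
- have approx b' : lt b' g -> exists k c, List.In c (A k g) /\ embeds (G b') (F c).
    have [A_lt _ A_cof] := hA l.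
    move=> /A_cof [k [c [cA b'c]]]; exists k, c; split=> //.
    exact: IH (A_lt _ _ cA) _ b'c.
  case: bg => [/approx [k [c [cA Gb_Fc]]]|->]; last exact: embeds_limit l approx.
  exact: embeds_limit_lt l cA Gb_Fc.
Qed.

End Embedding.
End TransfiniteFamilies.

Theorem proposition3p8 (O : Type) (lt : O -> O -> Prop)
    (A B : nat -> O -> seq O) (F G : O -> {fset nat} -> Prop) :
  countable_ordinal_order lt ->
  approximating_family lt A -> approximating_family lt B ->
  transfinite_family lt A F -> transfinite_family lt B G ->
  forall (a : O) (N : nat -> Prop),
    (forall k, exists n, k <= n /\ N n) ->
    exists m : nat -> nat,
      (forall i, m i < m i.+1) /\ (forall i, N (m i)) /\
      (forall E, G a E -> F a (fimage m E)).
Proof.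
move=> ord hA hB hF hG a N N_unbounded.
have [m0 m0_incr Ga_Fa] := embeds_le ord hA hB hF hG (or_intror (erefl a)).
have [m [m_incr m0_m mN]] := exists_increasing_above m0 N_unbounded.
exists m; do 2!split=> //; move=> E /Ga_Fa.
by apply: (F_dominate ord hA hF m0_incr m_incr) => i _; apply: m0_m.
Qed.
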